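(* Let $\mathcal{W}=\{W_1,\dots,W_N\}$ be a finite set of $d\times k$ real matrices, let $\mathcal{V}$ be a linear subspace of $\mathbb{S}^d$, and let $\mathcal{C}(\mathcal{W})^*=\{\sum_{i=1}^NW_iX_iW_i^T: X_i\in\mathbb{S}^k_+\}$. Consider the semidefinite program in the variables $X\in\mathbb{S}^d$, $X_i,T_i\in\mathbb{S}^k$: $$\text{maximize }\sum_{i=1}^N\operatorname{trace}T_i\ \text{ subject to } X\in\mathcal{V},\ X=\sum_{i=1}^NW_iX_iW_i^T,\ X_i\succeq T_i,\ I\succeq T_i\succeq 0\ (i=1,\dots,N).$$ For any optimal solution $(X,X_i,T_i)$ of this program, $X\in\mathcal{V}\cap\mathcal{C}(\mathcal{W})^*$ and $\operatorname{rank}X\ge\operatorname{rank}Y$ for all $Y\in\mathcal{V}\cap\mathcal{C}(\mathcal{W})^*$.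
   Context: $\mathbb{S}^d$ denotes real symmetric $d\times d$ matrices, $\mathbb{S}^k_+$ the cone of positive semidefinite $k\times k$ matrices, and $A\succeq B$ means $A-B$ is positive semidefinite. *)

From HB Require Import structures.
From mathcomp Require Import all_boot all_order all_algebra.
Set Implicit Arguments. Unset Strict Implicit. Unset Printing Implicit Defensive.
Import Order.TTheory GRing.Theory Num.Theory.
Local Open Scope ring_scope.

Definition symmx (R : realFieldType) (n : nat) (A : 'M[R]_n) : Prop := A^T = A.

Definition psdmx (R : realFieldType) (n : nat) (A : 'M[R]_n) : Prop :=
  symmx A /\ forall v : 'rV[R]_n, 0 <= (v *m A *m v^T) 0 0.

Definition loewner_ge (R : realFieldType) (n : nat) (A B : 'M[R]_n) : Prop :=
  psdmx (A - B).

Definition in_dual_cone (R : realFieldType) (N d k : nat)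
    (W : 'I_N -> 'M[R]_(d, k)) (Y : 'M[R]_d) : Prop :=
  exists Xs : 'I_N -> 'M[R]_k,
    (forall i, psdmx (Xs i)) /\ Y = \sum_(i < N) W i *m Xs i *m (W i)^T.

Definition sdp_feasible (R : realFieldType) (N d k : nat)
    (W : 'I_N -> 'M[R]_(d, k)) (V : {vspace 'M[R]_d})
    (X : 'M[R]_d) (Xs Ts : 'I_N -> 'M[R]_k) : Prop :=
  [/\ symmx X, X \in V,
      X = \sum_(i < N) W i *m Xs i *m (W i)^T &
      forall i, [/\ symmx (Xs i), symmx (Ts i),
                  loewner_ge (Xs i) (Ts i),
                  loewner_ge 1%:M (Ts i) & loewner_ge (Ts i) 0]].

Definition sdp_objective (R : realFieldType) (N k : nat)
    (Ts : 'I_N -> 'M[R]_k) : R := \sum_(i < N) \tr (Ts i).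

Definition sdp_optimal (R : realFieldType) (N d k : nat)
    (W : 'I_N -> 'M[R]_(d, k)) (V : {vspace 'M[R]_d})
    (X : 'M[R]_d) (Xs Ts : 'I_N -> 'M[R]_k) : Prop :=
  sdp_feasible W V X Xs Ts /\
  forall X' Xs' Ts', sdp_feasible W V X' Xs' Ts' ->
    sdp_objective Ts' <= sdp_objective Ts.

From HB Require Import structures.
From mathcomp Require Import all_boot all_order all_algebra.
From mathcomp Require Import reals.
From mathcomp Require Import ring lra zify.
Import Order.TTheory GRing.Theory Num.Theory.
Set Implicit Arguments. Unset Strict Implicit. Unset Printing Implicit Defensive.
Local Open Scope ring_scope.

(* Let (X, X_i, T_i) be optimal and Y = sum W_i Y_i W_i^T in V with Y_i psd.
   If rank Y > rank X, some v kills X but not Y, so for some j the vector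
   u = v W_j kills X_j (hence T_j) but not M = X_j + Y_j; thus
   rank T_j < rank M.  Pick q = p M != 0 with q T_j = 0: then T_j + e q^T q
   still lies below I and below M for small e > 0, and moving to
   (2X + Y, 2X_i + Y_i) with T_j increased in this way stays feasible while
   raising the objective by e |q|^2 > 0, contradicting optimality.  Hence
   ker X is contained in ker Y. *)

Definition qf (R : realFieldType) n (v : 'rV[R]_n) (A : 'M[R]_n) : R :=
  (v *m A *m v^T) 0 0.

Section QuadraticForm.
Variables (R : realFieldType) (n : nat).
Implicit Types (A B : 'M[R]_n) (v w r : 'rV[R]_n).

Lemma qfD v A B : qf v (A + B) = qf v A + qf v B.
Proof. by rewrite /qf mulmxDr mulmxDl mxE. Qed.

Lemma qfB v A B : qf v (A - B) = qf v A - qf v B.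
Proof. by rewrite qfD; congr (_ + _); rewrite /qf mulmxN mulNmx mxE. Qed.

Lemma qfZ v a A : qf v (a *: A) = a * qf v A.
Proof. by rewrite /qf -scalemxAr -scalemxAl mxE. Qed.

Lemma qf0 v : qf v 0 = 0.
Proof. by rewrite /qf mulmx0 mul0mx mxE. Qed.

Lemma qf_sum N v (F : 'I_N -> 'M[R]_n) :
  qf v (\sum_(i < N) F i) = \sum_(i < N) qf v (F i).
Proof. exact: (big_morph (qf v) (qfD v) (qf0 v)). Qed.

Lemma qf_conj m v (W : 'M[R]_(n, m)) (A : 'M[R]_m) :
  qf v (W *m A *m W^T) = qf (v *m W) A.
Proof. by rewrite /qf trmx_mul !mulmxA. Qed.

Lemma mx11_trmx (a : 'rV[R]_n) (b : 'cV[R]_n) : (a *m b) 0 0 = (b^T *m a^T) 0 0.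
Proof. by rewrite -trmx_mul [RHS]mxE. Qed.

Lemma qf_rank1 w r : qf w (r^T *m r) = ((w *m r^T) 0 0) ^+ 2.
Proof.
rewrite /qf mulmxA -mulmxA mxE big_ord1 expr2; congr (_ * _).
by rewrite (mx11_trmx r) trmxK.
Qed.

Lemma qf_combination A w r x y : symmx A ->
  qf (x *: w + y *: r) A =
  x ^+ 2 * qf w A + 2 * x * y * (w *m A *m r^T) 0 0 + y ^+ 2 * qf r A.
Proof.
move=> symA; rewrite /qf linearD /= !linearZ /= !mulmxDl !mulmxDr.
rewrite -!scalemxAl -!scalemxAr.
have sym_wr : (r *m A *m w^T) 0 0 = (w *m A *m r^T) 0 0.
  by rewrite mx11_trmx !trmx_mul trmxK symA mulmxA.
move: sym_wr; move: (w *m A *m w^T) (w *m A *m r^T) (r *m A *m w^T) (r *m A *m r^T).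
by move=> ww wr rw rr sym_wr; rewrite !mxE sym_wr; ring.
Qed.

End QuadraticForm.

Section Psd.
Variables (R : realFieldType) (n : nat).
Implicit Types (A B : 'M[R]_n) (v w q r : 'rV[R]_n).

Lemma psd_sym A : psdmx A -> symmx A.
Proof. by case. Qed.

Lemma psd_qf v A : psdmx A -> 0 <= qf v A.
Proof. by case=> _; apply. Qed.

Lemma psd_CauchySchwarz A w r :
  psdmx A -> ((w *m A *m r^T) 0 0) ^+ 2 <= qf w A * qf r A.
Proof.
move=> psdA; have symA := psd_sym psdA.
have ge0 x y :
    0 <= x ^+ 2 * qf w A + 2 * x * y * (w *m A *m r^T) 0 0 + y ^+ 2 * qf r A.
  by rewrite -qf_combination //; apply: psd_qf.
move: ge0 (psd_qf w psdA) (psd_qf r psdA).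
move: (qf w A) ((w *m A *m r^T) 0 0) (qf r A) => a b c ge0 a_ge0 c_ge0.
have [c0|c_neq0] := eqVneq c 0.
  by have := ge0 b (- (a + 2)); rewrite c0 => h; nra.
have c_gt0 : 0 < c by rewrite lt_def c_neq0.
by have := ge0 c (- b); nra.
Qed.

Lemma psd_ker A v : psdmx A -> qf v A = 0 -> v *m A = 0.
Proof.
move=> psdA qv0.
have orth w : (w *m A *m v^T) 0 0 = 0.
  apply/eqP; rewrite -sqrf_eq0 eq_le sqr_ge0 andbT.
  by have := psd_CauchySchwarz w v psdA; rewrite qv0 mulr0.
have -> : v *m A = (A *m v^T)^T by rewrite trmx_mul trmxK (psd_sym psdA).
apply/matrixP => i j; rewrite mxE [RHS]mxE (ord1 i).
by have := orth (delta_mx 0 j); rewrite -mulmxA -rowE mxE.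
Qed.

Lemma psd1 : psdmx (1%:M : 'M[R]_n).
Proof.
split=> [|v]; first by rewrite /symmx trmx1.
by rewrite mulmx1 mxE sumr_ge0 // => i _; rewrite mxE -expr2 sqr_ge0.
Qed.

Lemma psdD A B : psdmx A -> psdmx B -> psdmx (A + B).
Proof.
move=> psdA psdB; split=> [|v].
  by rewrite /symmx linearD /= (psd_sym psdA) (psd_sym psdB).
by rewrite -/(qf v _) qfD addr_ge0 // psd_qf.
Qed.

Lemma psdZ a A : 0 <= a -> psdmx A -> psdmx (a *: A).
Proof.
move=> a_ge0 psdA; split=> [|v]; first by rewrite /symmx linearZ /= (psd_sym psdA).
by rewrite -/(qf v _) qfZ mulr_ge0 // psd_qf.
Qed.

Lemma psd_rank1 r : psdmx (r^T *m r).
Proof.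
split=> [|v]; first by rewrite /symmx trmx_mul trmxK.
by rewrite -/(qf v _) qf_rank1 sqr_ge0.
Qed.

Lemma loewner_ge_ker A B v :
  psdmx A -> loewner_ge B A -> v *m B = 0 -> v *m A = 0.
Proof.
move=> psdA BgeA vB0; apply: psd_ker => //.
have : qf v B = 0 by rewrite /qf vB0 mul0mx mxE.
have := psd_qf v psdA; have := psd_qf v BgeA; rewrite qfB; lra.
Qed.

(* If A r^T = q^T then A - e q^T q is psd as long as e (r A r^T) <= 1:
   by Cauchy-Schwarz for A, (w q^T)^2 = (w A r^T)^2 <= (w A w^T)(r A r^T). *)
Lemma psd_sub_rank1 A r q e :
  psdmx A -> A *m r^T = q^T -> 0 <= e -> e * qf r A <= 1 ->
  psdmx (A - e *: (q^T *m q)).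
Proof.
move=> psdA Ar_q e_ge0 e_le; split.
  by rewrite /symmx linearB /= linearZ /= trmx_mul trmxK (psd_sym psdA).
move=> w; rewrite -/(qf w _) qfB qfZ qf_rank1 -Ar_q mulmxA.
have := psd_CauchySchwarz w r psdA; have := psd_qf w psdA.
move: (qf w A) (qf r A) ((w *m A *m r^T) 0 0) e_le => a c b e_le a_ge0 CS.
have : e * b ^+ 2 <= e * (a * c) by apply: ler_wpM2l.
have : a * (e * c) <= a * 1 by apply: ler_wpM2l.
nra.
Qed.

End Psd.

Section KernelRank.
Variables (F : fieldType) (m n p : nat).
Implicit Types (A : 'M[F]_(m, n)) (B : 'M[F]_(m, p)) (u v : 'rV[F]_m).

Lemma sub_kermx_of_ker A B :
  (forall v, v *m A = 0 -> v *m B = 0) -> (kermx A <= kermx B)%MS.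
Proof.
move=> kerAB; apply/sub_kermxP; apply/row_matrixP => i.
by rewrite row_mul row0 kerAB // -row_mul mulmx_ker row0.
Qed.

Lemma ker_rank A B :
  (forall v, v *m A = 0 -> v *m B = 0) -> (\rank B <= \rank A)%N.
Proof.
move=> /sub_kermx_of_ker/mxrankS; rewrite !mxrank_ker.
by have := rank_leq_row A; have := rank_leq_row B; lia.
Qed.

Lemma ker_rank_lt A B u :
  (forall v, v *m A = 0 -> v *m B = 0) -> u *m B = 0 -> u *m A != 0 ->
  (\rank B < \rank A)%N.
Proof.
move=> kerAB uB0 uA_neq0.
have : (kermx A < kermx B)%MS.
  rewrite ltmxE sub_kermx_of_ker //=; apply: contra uA_neq0 => kerBA.
  by apply/eqP/sub_kermxP/(submx_trans _ kerBA)/sub_kermxP.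
move/rank_ltmx; rewrite !mxrank_ker.
by have := rank_leq_row A; have := rank_leq_row B; lia.
Qed.

End KernelRank.

Lemma rank_lt_ker (F : fieldType) m n p (A : 'M[F]_(m, n)) (B : 'M[F]_(m, p)) :
  (\rank B < \rank A)%N -> exists2 v : 'rV[F]_m, v *m B = 0 & v *m A != 0.
Proof.
move=> rankBA; have [rowsA0|] := boolP [forall i, row i (kermx B) *m A == 0].
  suff : (\rank A <= \rank B)%N by rewrite leqNgt rankBA.
  have kerB_A0 : kermx B *m A = 0.
    by apply/row_matrixP => i; rewrite row_mul row0; apply/eqP/(forallP rowsA0).
  by apply: ker_rank => v /sub_kermxP/submxP [D ->]; rewrite -mulmxA kerB_A0 mulmx0.
rewrite negb_forall => /existsP [i rowA_neq0].
by exists (row i (kermx B)); rewrite // -row_mul mulmx_ker row0.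
Qed.

(* Take p with p M T = 0 but q := p M != 0: q^T is fixed by I - T and equals
   M p^T, so psd_sub_rank1 leaves room for e q^T q below both I - T and M. *)
Lemma rank1_increment (R : realFieldType) n (T M : 'M[R]_n) :
  psdmx T -> loewner_ge 1%:M T -> psdmx M -> (\rank T < \rank M)%N ->
  exists P : 'M[R]_n, [/\ psdmx P, 0 < \tr P, loewner_ge 1%:M (T + P) & loewner_ge M P].
Proof.
move=> psdT IgeT psdM rankTM.
have [p pMT0 pM_neq0] := rank_lt_ker (leq_ltn_trans (mxrankM_maxr M T) rankTM).
set q := p *m M.
have q_fixed : (1%:M - T) *m q^T = q^T.
  by rewrite mulmxBl mul1mx -(psd_sym psdT) -trmx_mul /q -mulmxA pMT0 trmx0 subr0.
have Mp_q : M *m p^T = q^T by rewrite /q trmx_mul (psd_sym psdM).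
have qpos (r : 'rV[R]_n) A : psdmx A -> r *m A != 0 -> 0 < qf r A.
  move=> psdA rA_neq0; rewrite lt_def psd_qf // andbT.
  by apply: contraNneq rA_neq0 => /(psd_ker psdA) ->.
have q1_gt0 : 0 < qf q 1%:M by apply: qpos; [exact: psd1 | rewrite mulmx1].
have pM_gt0 := qpos p M psdM pM_neq0.
have qIT_ge0 : 0 <= qf q (1%:M - T) by apply: psd_qf.
pose c := qf q (1%:M - T) + qf p M.
have c_gt0 : 0 < c by rewrite /c; lra.
have le_c x : x <= c -> c^-1 * x <= 1.
  by move=> x_le; rewrite mulrC ler_pdivrMr // mul1r.
have c_inv_ge0 : 0 <= c^-1 by rewrite invr_ge0 ltW.
exists (c^-1 *: (q^T *m q)); split.
- exact/psdZ/psd_rank1.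
- rewrite mxtraceZ; have -> : \tr (q^T *m q) = qf q 1%:M.
    by rewrite mxtrace_mulC /mxtrace big_ord1 /qf mulmx1.
  by rewrite mulr_gt0 ?invr_gt0.
- rewrite /loewner_ge opprD addrA; apply: psd_sub_rank1 q_fixed _ _ => //.
  by apply: le_c; rewrite /c; lra.
- by apply: psd_sub_rank1 Mp_q _ _ => //; apply: le_c; rewrite /c; lra.
Qed.

Section SDP.
Variables (R : realFieldType) (N d k : nat).
Variables (W : 'I_N -> 'M[R]_(d, k)) (V : {vspace 'M[R]_d}).
Implicit Types (X Y : 'M[R]_d) (Xs Ys Ts : 'I_N -> 'M[R]_k).

Lemma sdp_feasible_psd X Xs Ts :
  sdp_feasible W V X Xs Ts -> forall i, psdmx (Ts i) /\ psdmx (Xs i).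
Proof.
case=> _ _ _ bounds i; have [_ _ XgeT _ Tge0] := bounds i.
have psdT : psdmx (Ts i) by move: Tge0; rewrite /loewner_ge subr0.
by split; rewrite // -(subrK (Ts i) (Xs i)); apply: psdD.
Qed.

Lemma mul_conj_sum_eq0 (As : 'I_N -> 'M[R]_k) (v : 'rV[R]_d) :
  (forall i, psdmx (As i)) ->
  v *m (\sum_(i < N) W i *m As i *m (W i)^T) = 0 <->
  (forall i, v *m W i *m As i = 0).
Proof.
move=> psdAs; split=> [v0 i | vWA0].
  have sum0 : \sum_(i < N) qf (v *m W i) (As i) = 0.
    by under eq_bigr do rewrite -qf_conj; rewrite -qf_sum /qf v0 mul0mx mxE.
  by apply: psd_ker => //; apply: (psumr_eq0P _ sum0) => // j _; apply: psd_qf.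
by rewrite mulmx_sumr big1 // => i _; rewrite !mulmxA vWA0 !mul0mx.
Qed.

Lemma sdp_feasible_improve X Xs Ts Y Ys j P :
  sdp_feasible W V X Xs Ts -> Y \in V -> symmx Y ->
  (forall i, psdmx (Ys i)) -> Y = \sum_(i < N) W i *m Ys i *m (W i)^T ->
  psdmx P -> loewner_ge 1%:M (Ts j + P) -> loewner_ge (Xs j + Ys j) P ->
  sdp_feasible W V (X + (X + Y)) (fun i => Xs i + (Xs i + Ys i))
    (fun i => if i == j then Ts j + P else Ts i).
Proof.
move=> feas YV symY psdYs Ydef psdP IgeTP MgeP.
have psdTX := sdp_feasible_psd feas.
have psdXXY i : psdmx (Xs i + (Xs i + Ys i)).
  by have [_ psdX] := psdTX i; do 2![apply: psdD => //].
case: feas => symX XV Xdef bounds; split.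
- by rewrite /symmx !linearD /= symX symY.
- by rewrite !memvD.
- by rewrite Xdef Ydef -!big_split; apply: eq_bigr => i _; rewrite !mulmxDr !mulmxDl.
move=> i; have [symXi symTi XgeT IgeT Tge0] := bounds i.
have XXY_sub (B : 'M[R]_k) : Xs i + (Xs i + Ys i) - (Ts i + B) =
    (Xs i - Ts i) + (Xs i + Ys i - B) by rewrite opprD addrACA.
have [eq_ij|_] := eqVneq i j; last first.
  split=> //; first exact: psd_sym (psdXXY i).
  have [_ psdXi] := psdTX i.
  by rewrite /loewner_ge -[Ts i]addr0 XXY_sub subr0; do 2![apply: psdD => //].
subst i; have [psdTj _] := psdTX j.
have psdTP : psdmx (Ts j + P) by apply: psdD.
split=> //; [exact: psd_sym (psdXXY j) | exact: psd_sym psdTP | |].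
- by rewrite /loewner_ge XXY_sub; apply: psdD.
- by rewrite /loewner_ge subr0.
Qed.

Lemma sdp_objective_bump Ts j P :
  sdp_objective (fun i => if i == j then Ts j + P else Ts i) =
  sdp_objective Ts + \tr P.
Proof.
rewrite /sdp_objective (bigD1 j) //= [in RHS](bigD1 j) //= eqxx mxtraceD.
rewrite (eq_bigr (fun i => \tr (Ts i))) => [|i /negbTE -> //]; ring.
Qed.

End SDP.

Theorem corollary2 (R : realType) (N d k : nat)
    (W : 'I_N -> 'M[R]_(d, k)) (V : {vspace 'M[R]_d})
    (hV : forall A : 'M[R]_d, A \in V -> symmx A)
    (X : 'M[R]_d) (Xs Ts : 'I_N -> 'M[R]_k) :
  sdp_optimal W V X Xs Ts ->
  [/\ X \in V, in_dual_cone W X &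
      forall Y : 'M[R]_d, Y \in V -> in_dual_cone W Y ->
        (\rank Y <= \rank X)%N].
Proof.
case=> feas optimal; have psdTX := sdp_feasible_psd feas.
have psdXs i : psdmx (Xs i) by case: (psdTX i).
have [_ XV Xdef bounds] := feas.
split=> //; first by exists Xs.
move=> Y YV [Ys [psdYs Ydef]]; apply: ker_rank => v vX0.
apply/eqP; apply: contraT => vY_neq0.
have [j vWY_neq0] : exists j, v *m W j *m Ys j != 0.
  apply/existsP; apply: contraNT vY_neq0; rewrite negb_exists => /forallP vWY0.
  by rewrite Ydef; apply/eqP/mul_conj_sum_eq0 => // i; apply/eqP/negPn/vWY0.
have vWX0 : v *m W j *m Xs j = 0.
  by move: vX0; rewrite Xdef => /mul_conj_sum_eq0; apply.
have [psdTj _] := psdTX j; have [_ _ XgeT IgeT _] := bounds j.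
have MgeX : loewner_ge (Xs j + Ys j) (Xs j) by rewrite /loewner_ge addrC addKr.
have rankTM : (\rank (Ts j) < \rank (Xs j + Ys j)%R)%N.
  apply: (ker_rank_lt (u := v *m W j)) => [u uM0||].
  - exact: loewner_ge_ker psdTj XgeT (loewner_ge_ker (psdXs j) MgeX uM0).
  - exact: loewner_ge_ker psdTj XgeT vWX0.
  - by rewrite mulmxDr vWX0 add0r.
have [P [psdP trP_gt0 IgeTP MgeP]] :=
  rank1_increment psdTj IgeT (psdD (psdXs j) (psdYs j)) rankTM.
have := optimal _ _ _
  (sdp_feasible_improve feas YV (hV _ YV) psdYs Ydef psdP IgeTP MgeP).
by rewrite sdp_objective_bump; lra.
Qed.
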